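(* Let $V$ be a finite nonempty set and $f:\{0,1\}^V\to\{0,1\}^V$ an and-net, and let $C$ be a signed digraph. Then $f$ has a circular subnetwork whose interaction graph is $C$ if and only if $C$ is a cycle of $G(f)$ that has no chord and no delocalizing vertex in $G(f)$.
   Context: For nonempty $I\subseteq V$ and $z\in\{0,1\}^{V\setminus I}$, the subnetwork of $f$ induced by $z$ is $h:\{0,1\}^I\to\{0,1\}^I$ with $h(x|_I)=f(x)|_I$ for all $x$ whose restriction to $V\setminus I$ is $z$. For a network $g$ on $W$ and $x^{j\alpha}$ the point equal to $x$ except its $j$-component is $\alpha$, the (global) interaction graph $G(g)$ is the signed digraph on $W$ with a positive (resp. negative) arc from $j$ to $i$ iff $g_i(x^{j1})-g_i(x^{j0})=1$ (resp. $=-1$) for at least one $x$. $f$ is an and-net if $G(f)$ has at most one arc from $j$ to $i$ for all $i,j$ and for every $i$ and $x$: $f_i(x)=1$ iff $G(f)$ has no positive arc $j\to i$ with $x_j=0$ and no negative arc $j\to i$ with $x_j=1$. A cycle is a subgraph with at most one arc between any ordered pair whose underlying unsigned digraph is a directed cycle; positive (negative) if it has an even (odd) number of negative arcs. $g$ is circular if $G(g)$ itself is a cycle through all vertices of $W$. A cycle $C$ of $G$ has no chord if its underlying unsigned digraph is an induced subgraph of the underlying unsigned digraph of $G$. A vertex $v$ (possibly on $C$) is a delocalizing vertex of $C$ in $G$ if $G$ has a positive arc from $v$ to a vertex of $C$ and a negative arc from $v$ to a different vertex of $C$. *)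

From mathcomp Require Import all_boot.
Set Implicit Arguments. Unset Strict Implicit. Unset Printing Implicit Defensive.

Definition config (W : finType) := {ffun W -> bool}.
Definition network (W : finType) := config W -> config W.

Definition flip (W : finType) (x : config W) (j : W) (b : bool) : config W :=
  [ffun k => if k == j then b else x k].

(* A signed digraph on (a subset of) W is a pair (I, A) with I : {set W} the
   vertex set and A : {set W * W * bool} the arcs; ((j, i), true) is a positive
   arc j -> i and ((j, i), false) a negative arc j -> i. *)
Definition sdigraph_wf (W : finType) (I : {set W}) (A : {set W * W * bool}) :=
  forall j i b, ((j, i), b) \in A -> (j \in I) && (i \in I).

Definition igraph (W : finType) (g : network W) : {set W * W * bool} :=
  [set a : W * W * bool |
     let: ((j, i), s) := a in
     [exists x : config W,
        if s then g (flip x j true) i && ~~ g (flip x j false) i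
        else ~~ g (flip x j true) i && g (flip x j false) i]].

Definition simple_arcs (W : finType) (A : {set W * W * bool}) :=
  forall j i, ~ ((((j, i), true) \in A) /\ (((j, i), false) \in A)).

Definition and_net (V : finType) (f : network V) :=
  simple_arcs (igraph f) /\
  forall (i : V) (x : config V),
    f x i = [forall j, ~~ ((((j, i), true) \in igraph f) && ~~ x j)
                      && ~~ ((((j, i), false) \in igraph f) && x j)].

(* The underlying unsigned digraph of (I, A) is a directed cycle
   (a loop when the cycle has length one). *)
Definition directed_cycle (W : finType) (I : {set W}) (A : {set W * W * bool}) :=
  exists s : seq W, [/\ s != [::], uniq s, I = [set v in s] &
    forall j i, (exists b, ((j, i), b) \in A) <-> (j \in s /\ i = next s j)].

Definition is_cycle (W : finType) (I : {set W}) (A : {set W * W * bool}) :=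
  simple_arcs A /\ directed_cycle I A.

Definition cycle_of (W : finType) (G : {set W * W * bool})
    (I : {set W}) (A : {set W * W * bool}) :=
  A \subset G /\ is_cycle I A.

Definition no_chord (W : finType) (G : {set W * W * bool})
    (I : {set W}) (A : {set W * W * bool}) :=
  forall j i, j \in I -> i \in I ->
    (exists b, ((j, i), b) \in G) -> (exists b, ((j, i), b) \in A).

Definition delocalizing (W : finType) (G : {set W * W * bool})
    (I : {set W}) (v : W) :=
  exists u w, [/\ u \in I, w \in I, u != w,
                  ((v, u), true) \in G & ((v, w), false) \in G].

(* Subnetworks.  The subnetwork index set is the subtype of I; z is a
   configuration on V of which only the restriction to V \ I is used. *)
Definition subT (V : finType) (I : {set V}) := {v : V | v \in I}.

Definition extend (V : finType) (I : {set V}) (y : config (subT I))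
    (z : config V) : config V :=
  [ffun v => if insub v is Some i then y i else z v].

Definition subnetwork (V : finType) (f : network V) (I : {set V}) (z : config V)
    : network (subT I) :=
  fun y => [ffun i : subT I => f (extend y z) (val i)].

Definition circular (W : finType) (g : network W) :=
  is_cycle [set: W] (igraph g).

Definition arcs_in (V : finType) (I : {set V}) (A : {set subT I * subT I * bool})
    : {set V * V * bool} :=
  [set ((val a.1.1, val a.1.2), a.2) | a in A].

Arguments subnetwork {V} f I z _.

From mathcomp Require Import all_boot.

Set Implicit Arguments.
Unset Strict Implicit.
Unset Printing Implicit Defensive.

(* In an and-net, the value [b] of an input [v] of [f_i] either is harmless
   ([admissible i v b]) or switches [f_i] off, according to the sign of the
   arc [v -> i]. Fixing the vertices outside [I] to [z] therefore only deletes
   or keeps the arcs entering each [i] in [I]: they are all kept when no fixed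
   vertex switches [f_i] off ([unblocked i]), and all deleted otherwise. A
   circular subnetwork must keep an arc into every vertex, so its interaction
   graph is the subgraph induced by [G(f)] on [I]. That graph is a cycle
   exactly when [I] spans a chordless cycle; then a vertex of [I] has a single
   out-neighbour in [I], and a fixed vertex is harmless for all its
   out-neighbours in [I] only if its arcs into [I] all have the same sign.
   Conversely, when there is no delocalizing vertex, fixing every outside
   vertex to the sign of its arcs into [I] ([sign_into I]) switches nothing
   off. *)

Lemma igraphE (W : finType) (g : network W) j i b :
  (((j, i), b) \in igraph g) =
  [exists x, g (flip x j b) i && ~~ g (flip x j (~~ b)) i].
Proof. by rewrite inE; case: b => //=; apply: eq_existsb => x; exact: andbC. Qed.

Lemma simple_arcs_sign (W : finType) (A : {set W * W * bool}) j i b c :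
  simple_arcs A -> ((j, i), b) \in A -> ((j, i), c) \in A -> b = c.
Proof. by move=> simpleA; case: b c => [] [] // ji ji'; case: (simpleA j i). Qed.

Section Cycles.
Variable W : finType.
Implicit Types (I : {set W}) (A G : {set W * W * bool}).

Lemma directed_cycle_neq0 I A : directed_cycle I A -> I != set0.
Proof.
by case=> [[|a s] [//= _ _ -> _]]; apply/set0Pn; exists a; rewrite inE mem_head.
Qed.

Lemma directed_cycle_in A :
  directed_cycle [set: W] A -> forall i, exists j b, ((j, i), b) \in A.
Proof.
case=> s [_ us sT arcs] i; have si : i \in s by have := in_setT i; rewrite sT inE.
by exists (prev s i); apply/arcs; rewrite mem_prev next_prev.
Qed.

Lemma directed_cycle_out I A v u w b c :
  directed_cycle I A -> ((v, u), b) \in A -> ((v, w), c) \in A -> u = w.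
Proof.
case=> s [_ _ _ arcs] vu vw.
have [_ ->] := (arcs v u).1 (ex_intro _ b vu).
by have [_ ->] := (arcs v w).1 (ex_intro _ c vw).
Qed.

Definition induced G I : {set W * W * bool} :=
  [set a in G | (a.1.1 \in I) && (a.1.2 \in I)].

Lemma induced_sub G I : induced G I \subset G.
Proof. by apply/subsetP => a; rewrite inE => /andP[]. Qed.

Lemma induced_no_chord G I : no_chord G I (induced G I).
Proof. by move=> j i jI iI [b ji]; exists b; rewrite inE /= ji jI iI. Qed.

Lemma chordless_induced G I A : simple_arcs G -> sdigraph_wf I A ->
  A \subset G -> no_chord G I A -> A = induced G I.
Proof.
move=> simpleG wfA AG chordless; apply/setP => [[[j i] b]]; rewrite inE /=.
apply/idP/idP => [ji | /andP[ji /andP[jI iI]]].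
  by have /andP[jI iI] := wfA _ _ _ ji; rewrite (subsetP AG _ ji) jI iI.
have [b' ji'] := chordless j i jI iI (ex_intro _ b ji).
by rewrite (simple_arcs_sign simpleG ji (subsetP AG _ ji')).
Qed.
End Cycles.

Section ArcsIn.
Variables (V : finType) (I : {set V}).
Implicit Type A : {set subT I * subT I * bool}.

Lemma arcs_inE A (j i : subT I) b :
  (((val j, val i), b) \in arcs_in A) = (((j, i), b) \in A).
Proof.
apply: (mem_imset _ ((j, i), b)) => [[[? ?] ?]] [[? ?] ?] /=.
by case=> /val_inj -> /val_inj -> ->.
Qed.

Lemma arcs_in_val A j i b : ((j, i), b) \in arcs_in A ->
  exists j' i' : subT I, j = val j' /\ i = val i'.
Proof. by case/imsetP => [[[j' i'] b']] _ [-> -> _]; exists j', i'. Qed.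

Lemma simple_arcs_in A : simple_arcs A <-> simple_arcs (arcs_in A).
Proof.
split=> [simpleA j i [ji ji'] | simpleA j i [ji ji']].
  have [j' [i' [Ej Ei]]] := arcs_in_val ji; subst j i.
  by rewrite !arcs_inE in ji ji'; exact: simpleA j' i' (conj ji ji').
by apply: (simpleA (val j) (val i)); rewrite !arcs_inE.
Qed.

Lemma next_map_val (s : seq (subT I)) j i : uniq s ->
  (val j \in map val s /\ val i = next (map val s) (val j)) <->
  (j \in s /\ i = next s j).
Proof.
move=> us; rewrite (mem_map val_inj) (next_map val_inj us).
by split=> [] [js Ei]; split=> //; [exact: val_inj | rewrite Ei].
Qed.

Lemma directed_cycle_arcs_in A :
  directed_cycle [set: subT I] A <-> directed_cycle I (arcs_in A).
Proof.
split=> [[s [sn us sT arcs]] | [s [sn us Is arcs]]].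
  exists (map val s); split.
  - by case: s sn {us sT arcs}.
  - by rewrite (map_inj_uniq val_inj).
  - apply/setP => v; rewrite inE; apply/idP/mapP => [vI | [v' _ ->]]; last exact: valP.
    exists (Sub v vI); rewrite ?SubK //.
    by have := in_setT (Sub v vI : subT I); rewrite sT inE.
  - move=> j i; split=> [[b ji] | [/mapP [j' js ->] ->]].
      have [j' [i' [Ej Ei]]] := arcs_in_val ji; subst j i.
      by rewrite arcs_inE in ji; apply/next_map_val => //; apply/arcs; exists b.
    have [b ji] := (arcs j' (next s j')).2 (conj js erefl).
    by exists b; rewrite (next_map val_inj us) arcs_inE.
pose s' := pmap insub s : seq (subT I).
have s's : map val s' = s.
  rewrite (pmap_filter (insubK _)); apply/all_filterP/allP => v vs /=.
  by case: insubP => //; rewrite Is inE vs.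
have us' : uniq s' by exact: pmap_sub_uniq.
exists s'; split=> //.
- by move: sn; rewrite -s's; case: (s').
- apply/setP => v; rewrite !inE -(mem_map val_inj) s's.
  have : val v \in [set x in s] by rewrite -Is; exact: valP.
  by rewrite inE => ->.
- move=> j i; split=> [[b ji] | /(next_map_val _ _ us')].
    apply/(next_map_val _ _ us'); rewrite s's.
    by apply/arcs; exists b; rewrite arcs_inE.
  by rewrite s's => /arcs [b ji]; exists b; rewrite -arcs_inE.
Qed.

Lemma is_cycle_arcs_in A : is_cycle [set: subT I] A <-> is_cycle I (arcs_in A).
Proof.
by split=> [] [simpleA cycA]; split;
  [exact/simple_arcs_in | exact/directed_cycle_arcs_in
  | exact/simple_arcs_in | exact/directed_cycle_arcs_in].
Qed.

End ArcsIn.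

Section Extend.
Variables (V : finType) (I : {set V}) (z : config V).

Lemma extend_notin (y : config (subT I)) v : v \notin I -> extend y z v = z v.
Proof. by move=> vI; rewrite ffunE insubN. Qed.

Lemma extend_flip (y : config (subT I)) j b :
  extend (flip y j b) z = flip (extend y z) (val j) b.
Proof.
apply/ffunP => v; rewrite !ffunE; case: insubP => [k _ <- | vI].
  by rewrite ffunE (inj_eq val_inj).
by case: eqP vI => // ->; rewrite (valP j).
Qed.

End Extend.

Section AndNet.
Variables (V : finType) (f : network V).
Hypothesis f_and : and_net f.
Let N := igraph f.

Definition admissible i v (b : bool) :=
  if b then ((v, i), false) \notin N else ((v, i), true) \notin N.

Lemma and_netE x i : f x i = [forall v, admissible i v (x v)].
Proof.
rewrite (proj2 f_and); apply: eq_forallb => v.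
by rewrite /admissible; case: (x v); rewrite /= ?andbT ?andbF /= ?andbT.
Qed.

Lemma admissible_arc i j b :
  admissible i j b && ~~ admissible i j (~~ b) = (((j, i), b) \in N).
Proof.
rewrite /admissible; case: b; rewrite /= negbK; apply/andP/idP => [[] // | ji];
  split=> //; apply/negP => ji'; by have := simple_arcs_sign (proj1 f_and) ji ji'.
Qed.

Lemma admissible_pos i v : admissible i v (((v, i), true) \in N).
Proof.
rewrite /admissible; case: ifP => [pos | ->] //; apply/negP => neg.
by have := simple_arcs_sign (proj1 f_and) pos neg.
Qed.

Lemma and_net_flip x j b i : f (flip x j b) i =
  admissible i j b && [forall v, (v != j) ==> admissible i v (x v)].
Proof.
rewrite and_netE; apply/forallP/andP => [H | [Hj /forallP H] v].
  split; first by have := H j; rewrite ffunE eqxx.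
  by apply/forallP => v; apply/implyP => vj; have := H v; rewrite ffunE (negbTE vj).
by rewrite ffunE; case: eqP => [-> // | /eqP vj]; exact: implyP (H v) vj.
Qed.

Section Subnetwork.
Variables (I : {set V}) (z : config V).
Let h := subnetwork f I z.

Definition unblocked i := [forall v, (v \notin I) ==> admissible i v (z v)].

Lemma unblockedE (j : subT I) i :
  [exists y : config (subT I),
     [forall v, (v != val j) ==> admissible i v (extend y z v)]] =
  unblocked i.
Proof.
apply/existsP/forallP => [[y /forallP H] v | H].
  apply/implyP => vI; move: (H v).
  case: eqP vI => [-> | _ vI]; first by rewrite (valP j).
  by rewrite extend_notin.
exists [ffun k : subT I => ((val k, i), true) \in N].
apply/forallP => v; apply/implyP => _.
rewrite ffunE; case: insubP => [k _ <- | vI]; first by rewrite ffunE admissible_pos.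
exact: implyP (H v) vI.
Qed.

Lemma igraph_subnetwork j i b :
  (((j, i), b) \in igraph h) = (((val j, val i), b) \in N) && unblocked (val i).
Proof.
have hE y c : h (flip y j c) i = f (flip (extend y z) (val j) c) (val i).
  by rewrite ffunE extend_flip.
rewrite igraphE -(unblockedE j); apply/existsP/andP => [[y] | [ji /existsP [y Hy]]].
  rewrite !hE !and_net_flip => /andP[/andP[Hb Hy] /nandP[Hnb | /negP //]].
  by rewrite -admissible_arc Hb Hnb; split=> //; apply/existsP; exists y.
exists y; rewrite !hE !and_net_flip Hy !andbT.
by move: ji; rewrite -admissible_arc.
Qed.

Lemma arcs_in_subnetwork : {in I, forall i, unblocked i} ->
  arcs_in (igraph h) = induced N I.
Proof.
move=> unb; apply/setP => [[[j i] b]]; rewrite inE /=.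
apply/idP/idP => [ji | /andP[ji /andP[jI iI]]].
  have [j' [i' [Ej Ei]]] := arcs_in_val ji; subst j i.
  move: ji; rewrite arcs_inE igraph_subnetwork => /andP[-> _] /=.
  by apply/andP; split; exact: valP.
have := arcs_inE (igraph h) (Sub j jI) (Sub i iI) b.
by rewrite !SubK igraph_subnetwork /= ji unb.
Qed.

Lemma circular_unblocked : circular h -> {in I, forall i, unblocked i}.
Proof.
case=> _ /directed_cycle_in in_arc i iI; have [j [b]] := in_arc (Sub i iI).
by rewrite igraph_subnetwork SubK => /andP[].
Qed.

Lemma unblocked_no_delocalizing : {in I, forall i, unblocked i} ->
  directed_cycle I (induced N I) -> ~ exists v, delocalizing N I v.
Proof.
move=> unb cycI [v [u [w [uI wI uw vu vw]]]]; case: (boolP (v \in I)) => vI.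
  apply/(negP uw)/eqP/(directed_cycle_out cycI (v := v) (b := true) (c := false));
  by rewrite inE /= ?vu ?vw vI ?uI ?wI.
have := implyP (forallP (unb u uI) v) vI; have := implyP (forallP (unb w wI) v) vI.
by rewrite /admissible; case: (z v); rewrite ?vu ?vw.
Qed.

End Subnetwork.

Definition sign_into (I : {set V}) : config V :=
  [ffun v => [exists u in I, ((v, u), true) \in N]].

Lemma sign_into_unblocked I : ~ (exists v, delocalizing N I v) ->
  {in I, forall i, unblocked I (sign_into I) i}.
Proof.
move=> nodeloc i iI; apply/forallP => v; apply/implyP => _.
rewrite /admissible ffunE; case: existsP => [[u /andP[uI vu]] | nopos].
  apply/negP => vi; case: (eqVneq u i) => [eui | ui].
    by subst u; have := simple_arcs_sign (proj1 f_and) vu vi.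
  by apply: nodeloc; exists v, u, i.
by apply/negP => vi; apply: nopos; exists i; rewrite iI.
Qed.

End AndNet.

Theorem proposition9 (V : finType) (f : network V)
    (CI : {set V}) (CA : {set V * V * bool}) :
  0 < #|V| -> and_net f -> sdigraph_wf CI CA ->
  (exists z : config V,
      [/\ CI != set0, circular (subnetwork f CI z)
        & CA = arcs_in (igraph (subnetwork f CI z))])
  <->
  [/\ cycle_of (igraph f) CI CA, no_chord (igraph f) CI CA
    & ~ (exists v : V, delocalizing (igraph f) CI v)].
Proof.
move=> _ f_and wfCA; split=> [[z [_ circ ->]] | [[CAf cycCA] chordless nodeloc]].
  have unb := circular_unblocked f_and circ.
  rewrite (arcs_in_subnetwork f_and unb).
  have cycI : is_cycle CI (induced (igraph f) CI).
    by rewrite -(arcs_in_subnetwork f_and unb); apply/is_cycle_arcs_in.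
  split; [by split; first exact: induced_sub | exact: induced_no_chord | ].
  exact: unblocked_no_delocalizing unb (proj2 cycI).
have unb := sign_into_unblocked f_and nodeloc.
have CAE := chordless_induced (proj1 f_and) wfCA CAf chordless.
exists (sign_into f CI); rewrite (arcs_in_subnetwork f_and unb) -CAE.
split=> //; first exact: directed_cycle_neq0 (proj2 cycCA).
by apply/is_cycle_arcs_in; rewrite (arcs_in_subnetwork f_and unb) -CAE.
Qed.
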